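(* Consider a linear many-worlds theory in which every permutation of worlds is an allowed transformation, i.e. every operator $T$ with $T_{ij}=\delta_{i,\pi(j)}$ for a bijection $\pi$ of $\{0,1,2,\dots\}$ is allowed. Let $p$ be a probability rule for this theory satisfying Axioms (A1)–(A3). Let $v=\sum_{n=0}^{N-1}v_n\lvert n\rangle$ be an allowed bounded state, so that $v_n=0$ for all $n\ge N$. If $v_n=v_m$ for some $n,m$, then $p_n(v)=p_m(v)$.
   Context: A linear many-worlds theory consists of the following data. The worlds are the vectors $\lvert n\rangle$, $n\in\{0,1,2,\dots\}$, of a countably infinite orthonormal basis of a real or complex vector space. A state is a vector $v=\sum_n v_n\lvert n\rangle$, and $v_n=\langle n\vert v\rangle$ is the amplitude of world $n$. A transformation is a linear operator $T$ with matrix elements $T_{ij}=\langle i\rvert T\lvert j\rangle$, acting by $v\mapsto v'=Tv$. A theory specifies a set of allowed states and a set of allowed transformations, and every allowed transformation maps allowed states to allowed states. A state is bounded if only finitely many of its amplitudes are nonzero. A probability rule assigns to each allowed state $v$ a sequence $(p_n(v))_{n\ge 0}$ of nonnegative reals with $\sum_n p_n(v)=1$. For a transformation $T$ and state $v$ we write $p'_n=p_n(Tv)$. The axioms are: (A1) Present state dependence: $p_n$ depends only on the present state $v$, so $p$ is a function of the state alone. (A2) Weak connection with amplitudes: for every allowed state $v$, $v_n=0$ implies $p_n(v)=0$. (A3) Weak connection with transformations: for every allowed state $v$ and allowed transformation $T$, and every partition of $\{0,1,2,\dots\}$ into subsets $\mathcal S_k$ such that $T_{ij}=0$ whenever $i$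 and $j$ lie in different subsets, we have $\sum_{n\in\mathcal S_k}p_n(v)=\sum_{n\in\mathcal S_k}p_n(Tv)$ for every $k$. *)

From HB Require Import structures.
From mathcomp Require Import all_boot all_order all_algebra.
From mathcomp Require Import all_classical all_reals all_analysis.
Set Implicit Arguments. Unset Strict Implicit. Unset Printing Implicit Defensive.
Import Order.TTheory GRing.Theory Num.Theory.
Local Open Scope ring_scope.

(* States: amplitude sequences v : nat -> K, with v n = <n|v>.
   Transformations: operators T : (nat -> K) -> (nat -> K). *)
Definition state (K : numFieldType) := nat -> K.
Definition operator (K : numFieldType) := state K -> state K.

Definition ket (K : numFieldType) (j : nat) : state K :=
  fun i => if i == j then 1 else 0.

Definition mat_el (K : numFieldType) (T : operator K) (i j : nat) : K :=
  T (ket K j) i.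

Definition is_linear_op (K : numFieldType) (T : operator K) : Prop :=
  forall (a : K) (u w : state K),
    T (fun i => a * u i + w i) = (fun i => a * T u i + T w i).

(* T is the permutation operator of pi : T |j> = |pi j>, i.e.
   (T v)_(pi j) = v_j, so that T_ij = delta_(i, pi j). *)
Definition is_perm_op (K : numFieldType) (pi : nat -> nat) (T : operator K) : Prop :=
  forall (v : state K) (j : nat), T v (pi j) = v j.

Definition lin_mw_theory (K : numFieldType)
  (Allowed : state K -> Prop) (Trans : operator K -> Prop) : Prop :=
  (forall T, Trans T -> is_linear_op T) /\
  (forall T v, Trans T -> Allowed v -> Allowed (T v)).

Definition all_perms_allowed (K : numFieldType) (Trans : operator K -> Prop) : Prop :=
  forall (pi : nat -> nat) (T : operator K), bijective pi -> is_perm_op pi T -> Trans T.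

(* probability rule: p v n >= 0, sum_n p v n = 1 (for allowed v).
   (A1) is built in: p is a function of the present state alone. *)
Definition prob_rule (K : numFieldType) (R : realType)
  (Allowed : state K -> Prop) (p : state K -> nat -> R) : Prop :=
  forall v, Allowed v ->
    (forall n, 0 <= p v n) /\ (\sum_(0 <= n <oo) (p v n)%:E = 1%E)%E.

Definition axiom_A2 (K : numFieldType) (R : realType)
  (Allowed : state K -> Prop) (p : state K -> nat -> R) : Prop :=
  forall v n, Allowed v -> v n = 0 -> p v n = 0.

(* (A3): a partition of nat into subsets S_k is given by a labelling
   lab : nat -> nat, with S_k = [set n | lab n = k]. *)
Definition axiom_A3 (K : numFieldType) (R : realType)
  (Allowed : state K -> Prop) (Trans : operator K -> Prop)
  (p : state K -> nat -> R) : Prop :=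
  forall v T (lab : nat -> nat), Allowed v -> Trans T ->
    (forall i j, lab i <> lab j -> mat_el T i j = 0) ->
    forall k, (\sum_(n <oo | lab n == k) (p v n)%:E =
               \sum_(n <oo | lab n == k) (p (T v) n)%:E)%E.

Definition bounded_state (K : numFieldType) (v : state K) : Prop :=
  exists N, forall n, (N <= n)%N -> v n = 0.

From HB Require Import structures.
From mathcomp Require Import all_boot all_order all_algebra.
From mathcomp Require Import all_classical all_reals all_analysis.
From mathcomp Require Import zify.
Import Order.TTheory GRing.Theory Num.Theory.
Local Open Scope ring_scope.

(* Let pi be an involution of the worlds with pi a = b and
   v b = 0.  The permutation operator T : x |-> x o pi only connects worlds
   within the orbits {i, pi i}, so (A3) applied to the orbit {a, b} gives
   p v a + p v b = p (v o pi) a + p (v o pi) b, and (A2) kills p v b and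
   p (v o pi) a: the probability of world a "moves" with its amplitude,
   p v a = p (v o pi) b.
   For the theorem take two worlds k1, k2 beyond the support of v.  Moving
   n to k2 (while swapping m with k1) and moving m to k2 (while swapping n
   with k1) produce the same state, because v n = v m and v k1 = v k2 = 0;
   hence p v n = p v m. *)

Definition swap (a b i : nat) : nat :=
  if i == a then b else if i == b then a else i.

Lemma swapL (a b : nat) : swap a b a = b.
Proof. by rewrite /swap eqxx. Qed.

Lemma swapR (a b : nat) : swap a b b = a.
Proof. by rewrite /swap eqxx; case: eqP. Qed.

Lemma swap_id (a b i : nat) : i != a -> i != b -> swap a b i = i.
Proof. by rewrite /swap => /negbTE -> /negbTE ->. Qed.

Lemma swapK (a b : nat) : involutive (swap a b).
Proof.
move=> i; case: (eqVneq i a) => [->|ia]; first by rewrite swapL swapR.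
case: (eqVneq i b) => [->|ib]; first by rewrite swapR swapL.
by rewrite !swap_id.
Qed.

Lemma swap_pair (a b i : nat) :
  (swap a b i == a) || (swap a b i == b) = (i == a) || (i == b).
Proof.
case: (eqVneq i a) => [->|ia]; first by rewrite swapL eqxx orbT.
case: (eqVneq i b) => [->|ib]; first by rewrite swapR eqxx.
by rewrite swap_id // (negbTE ia) (negbTE ib).
Qed.

Lemma swap_comm (a b c d : nat) :
  [&& a != c, a != d, b != c & b != d] ->
  forall i, swap a b (swap c d i) = swap c d (swap a b i).
Proof.
case/and4P=> ac ad bc bd i.
have fix_cd j : (j == a) || (j == b) -> swap c d j = j.
  by case/orP=> /eqP->; rewrite swap_id.
have fix_ab j : (j == c) || (j == d) -> swap a b j = j.
  by case/orP=> /eqP->; rewrite swap_id // eq_sym.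
have [iab|iab] := boolP ((i == a) || (i == b)).
  by rewrite !fix_cd ?swap_pair.
have [icd|icd] := boolP ((i == c) || (i == d)).
  by rewrite !fix_ab ?swap_pair.
move: iab icd; rewrite !negb_or => /andP[ia ib] /andP[ic id].
by rewrite !swap_id.
Qed.

Lemma swap2K (a b c d : nat) :
  [&& a != c, a != d, b != c & b != d] -> involutive (swap a b \o swap c d).
Proof. by move=> disj i /=; rewrite swap_comm // !swapK. Qed.

Ltac eval_eqs := repeat (rewrite /=; match goal with
  | |- context [?x == ?x] => rewrite eqxx
  | H : is_true (?x != ?y) |- context [?x == ?y] => rewrite (negbTE H)
  | H : is_true (?y != ?x) |- context [?x == ?y] => rewrite [x == y]eq_sym (negbTE H)
  end).

Lemma swap2_exchange (T : Type) (f : nat -> T) (a b c d : nat) :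
  [&& a != b, a != c, a != d, b != c, b != d & c != d] ->
  f a = f c -> f b = f d ->
  f \o (swap a b \o swap c d) = f \o (swap c b \o swap a d).
Proof.
case/and5P=> ab ac ad bc /andP[bd cd] fac fbd; apply/funext => i /=; rewrite /swap.
have [->|ni_a] := eqVneq i a; first by eval_eqs.
have [->|ni_b] := eqVneq i b; first by eval_eqs.
have [->|ni_c] := eqVneq i c; first by eval_eqs.
by have [_|ni_d] := eqVneq i d; eval_eqs.
Qed.

Lemma orbit_label (pi : nat -> nat) (a i : nat) : involutive pi ->
  (minn i (pi i) == minn a (pi a)) = (i == a) || (i == pi a).
Proof.
move=> piK; case: (eqVneq i a) => [->|ia]; first by rewrite eqxx.
case: (eqVneq i (pi a)) => [->|ipa]; first by rewrite piK minnC eqxx.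
have pia : pi i != a by apply: contra_neq ipa => <-; rewrite piK.
have pipa : pi i != pi a by apply: contra_neq ia; exact: (can_inj piK).
apply/eqP; rewrite /minn.
by case: ltnP => _; case: ltnP => _; apply/eqP; rewrite // eq_sym.
Qed.

Lemma series_pair (R : realType) (f : nat -> R) (a b : nat) (P : pred nat) :
  a != b -> (forall i, P i = (i == a) || (i == b)) ->
  (\sum_(i <oo | P i) (f i)%:E = (f a + f b)%:E)%E.
Proof.
move=> ab HP; apply/cvg_lim => //; apply: cvg_near_cst; near=> k.
have ka : (a < k)%N by near: k; exists a.+1.
have kb : (b < k)%N by near: k; exists b.+1.
rewrite (eq_bigl (fun i => (i == a) || (i == b))); last by move=> i; rewrite HP.
rewrite sumEFin; congr (_%:E).
have mem_k j : (j < k)%N -> j \in iota 0 (k - 0) by rewrite mem_iota subn0.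
rewrite big_mkcond (bigD1_seq a) ?mem_k ?iota_uniq //= eqxx.
rewrite big_mkcond (bigD1_seq b) ?mem_k ?iota_uniq //= eqxx orbT.
rewrite big1 ?addr0 => [|i ib]; first by rewrite eq_sym (negbTE ab).
by case: eqVneq => // _; rewrite (negbTE ib).
Unshelve. all: by end_near.
Qed.

Lemma prob_moves (K : numFieldType) (R : realType)
  (Allowed : state K -> Prop) (Trans : operator K -> Prop)
  (p : state K -> nat -> R) :
  lin_mw_theory Allowed Trans -> all_perms_allowed Trans ->
  axiom_A2 Allowed p -> axiom_A3 Allowed Trans p ->
  forall (v : state K) (pi : nat -> nat) (a b : nat),
  Allowed v -> involutive pi -> pi a = b -> a != b -> v b = 0 ->
  p v a = p (v \o pi) b.
Proof.
move=> Hth Hperm HA2 HA3 v pi a b Hv piK piab ab vb.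
pose T : operator K := fun x => x \o pi.
have HT : Trans T by apply: (Hperm pi) => [|x j]; [exact: inv_bij | rewrite /T /= piK].
have HTv : Allowed (T v) := Hth.2 _ _ HT Hv.
pose lab i := minn i (pi i).
have Tblock i j : lab i <> lab j -> mat_el T i j = 0.
  by rewrite /mat_el /T /ket /=; case: eqP => // <-; rewrite /lab piK minnC.
have orbit_ab i : (lab i == lab a) = (i == a) || (i == b).
  by rewrite /lab orbit_label // piab.
have := HA3 v T lab Hv HT Tblock (lab a).
rewrite !(series_pair _ _ _ _ _ ab orbit_ab) => -[].
rewrite (HA2 v b Hv vb) (HA2 (T v) a HTv); last by rewrite /T /= piab.
by rewrite addr0 add0r.
Qed.

Theorem lemma1 (K : numFieldType) (R : realType)
  (Allowed : state K -> Prop) (Trans : operator K -> Prop)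
  (p : state K -> nat -> R)
  (Hth : lin_mw_theory Allowed Trans)
  (Hperm : all_perms_allowed Trans)
  (Hp : prob_rule Allowed p)
  (HA2 : axiom_A2 Allowed p)
  (HA3 : axiom_A3 Allowed Trans p)
  (N : nat) (v : state K) (Hv : Allowed v)
  (HvN : forall n, (N <= n)%N -> v n = 0)
  (n m : nat) (Hnm : v n = v m) :
  p v n = p v m.
Proof.
have [<-//|nm] := eqVneq n m.
set k1 := (N + n + m).+1; set k2 := k1.+1.
have v1 : v k1 = 0 by apply: HvN; lia.
have v2 : v k2 = 0 by apply: HvN; lia.
have moves := @prob_moves K R Allowed Trans p Hth Hperm HA2 HA3 v.
have -> : p v n = p (v \o (swap n k2 \o swap m k1)) k2.
  apply: moves => //; [apply: swap2K | rewrite /= (@swap_id m k1 n) ?swapL |]; lia.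
have -> : p v m = p (v \o (swap m k2 \o swap n k1)) k2.
  apply: moves => //; [apply: swap2K | rewrite /= (@swap_id n k1 m) ?swapL |]; lia.
congr (p _ k2); apply: swap2_exchange; rewrite ?v1 ?v2 //; lia.
Qed.
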